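(* Under the scaled-down notification (SDN) policy, for every volunteer $v\in[V]$ and every $t\in[T]$, the probability that $v$ is active in period $t$ equals $\beta_{v,t}$; moreover, $\beta_{v,t}\ge\frac{1}{2-q}$.
   Context: Online volunteer notification problem. An instance consists of volunteers $[V]$, task types $[S]$, horizon $T$, arrival probabilities $\lambda_{s,t}\ge0$ with $\sum_s\lambda_{s,t}\le1$, match probabilities $p_{v,s}\in[0,1]$, and a probability mass function $g$ on the positive integers with CDF $G(\tau)=\sum_{i\le\tau}g(i)$, $G(0)=0$. In each period $t$ at most one task arrives, of type $s$ with probability $\lambda_{s,t}$, independently across periods. All volunteers start active. Upon an arrival the platform notifies a subset of volunteers; each notified active volunteer $v$ responds positively independently with probability $p_{v,s}$. A volunteer active and notified at time $t$ becomes inactive (regardless of response) and active again at $t+Z$, $Z\sim g$ independent; inactive volunteers ignore notifications and are unaffected by them. MDHR: $q=\min_{\tau\in\mathbb{N}}\frac{g(\tau)}{1-G(\tau-1)}$ (with $\frac00:=1$). Ex ante solution: $\mathcal{P}$ is the set of $\mathbf{x}$ with $0\le x_{v,s,t}\le1$ and $\sum_{\tau=1}^t\sum_s\lambda_{s,\tau}x_{v,s,\tau}(1-G(t-\tau))\le1$ for all $v,t$; $f(\mathbf{x})=\sum_{t,s}\lambda_{s,t}(1-\prod_v(1-x_{v,s,t}p_{v,s}))$; $\mathbf{x}^*_{LP}$ maximizes $\sum_{t,s}\lambda_{s,t}\min\{\sum_vx_{v,s,t}p_{v,s},1\}$ over $\mathcal{P}$; $\mathbf{x}^*_{AA}$ is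 the output of: $\mathbf{x}^0=\mathbf{0}$, for $i=1..m$ ($m\in\mathbb{N}$) $\mathbf{y}^i\in\arg\max_{\mathbf{x}\in\mathcal{P}}\langle\mathbf{x},\nabla f(\mathbf{x}^{i-1})\rangle$, $\mathbf{x}^i=\mathbf{x}^{i-1}+\mathbf{y}^i/m$, output $\mathbf{x}^m$; $\mathbf{x}^*_{SQ}$ built for $v=1..V$ in order, $(x^{SQ}_{v,s,t})_{s,t}$ optimal for $\max\sum_{t,s}\lambda_{s,t}\prod_{u<v}(1-p_{u,s}x^{SQ}_{u,s,t})p_{v,s}x_{v,s,t}$ s.t. $0\le x_{v,s,t}\le1$ and $\sum_{\tau\le t}\sum_s\lambda_{s,\tau}x_{v,s,\tau}(1-G(t-\tau))\le1$ for all $t$; $\mathbf{x}^*\in\arg\max_{\mathbf{x}\in\{\mathbf{x}^*_{LP},\mathbf{x}^*_{AA},\mathbf{x}^*_{SQ}\}}f(\mathbf{x})$. SDN policy: $\beta_{v,1}=1$ and $\beta_{v,t}=1-\sum_{t'=1}^{t-1}\sum_{s=1}^S\lambda_{s,t'}\frac{x^*_{v,s,t'}}{2-q}(1-G(t-t'))$ for $t\ge2$; when a task of type $s$ arrives at time $t$, each volunteer $v$ is notified independently with probability $\frac{x^*_{v,s,t}}{(2-q)\beta_{v,t}}$. *)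

From HB Require Import structures.
From mathcomp Require Import all_boot all_order all_algebra.
From mathcomp Require Import all_classical all_reals all_analysis.
Set Implicit Arguments. Unset Strict Implicit. Unset Printing Implicit Defensive.
Import Order.TTheory GRing.Theory Num.Theory.
Import numFieldNormedType.Exports.
Local Open Scope ring_scope.
Local Open Scope classical_set_scope.

(* Periods are 0-based: the ordinal t : 'I_T denotes period t+1 of the paper.
   Only differences of periods occur in the formulas, so this is a pure shift. *)

Definition vec (R : realType) (V S T : nat) := 'I_V -> 'I_S -> 'I_T -> R.

Definition Gc (R : realType) (g : nat -> R) (tau : nat) : R :=
  \sum_(1 <= i < tau.+1) g i.

(* hazard  g(tau) / (1 - G(tau-1)) with 0/0 := 1 (for tau >= 1) *)
Definition hz (R : realType) (g : nat -> R) (tau : nat) : R :=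
  let d := 1 - Gc g tau.-1 in if d == 0 then 1 else g tau / d.

(* MDHR  q = min_{tau >= 1} hz tau  (taken as the infimum, equal to the min
   whenever the min exists) *)
Definition qmdhr (R : realType) (g : nat -> R) : R :=
  inf (range (fun n : nat => hz g n.+1)).

Definition inP (R : realType) V S T (lam : 'I_S -> 'I_T -> R) (g : nat -> R)
    (x : vec R V S T) : Prop :=
  (forall v s t, 0 <= x v s t <= 1) /\
  (forall v (t : 'I_T),
     \sum_(tau < T | (tau <= t)%N) \sum_(s < S)
        lam s tau * x v s tau * (1 - Gc g (t - tau)) <= 1).

Definition fobj (R : realType) V S T (lam : 'I_S -> 'I_T -> R)
    (p : 'I_V -> 'I_S -> R) (x : vec R V S T) : R :=
  \sum_(t < T) \sum_(s < S)
     lam s t * (1 - \prod_(v < V) (1 - x v s t * p v s)).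

Definition lpobj (R : realType) V S T (lam : 'I_S -> 'I_T -> R)
    (p : 'I_V -> 'I_S -> R) (x : vec R V S T) : R :=
  \sum_(t < T) \sum_(s < S) lam s t * Num.min (\sum_(v < V) x v s t * p v s) 1.

Definition is_LP (R : realType) V S T lam p g (x : vec R V S T) : Prop :=
  inP lam g x /\ (forall y, inP lam g y -> lpobj lam p y <= lpobj lam p x).

(* gradient of f (explicit partial derivatives of the multilinear f) *)
Definition gradf (R : realType) V S T (lam : 'I_S -> 'I_T -> R)
    (p : 'I_V -> 'I_S -> R) (x : vec R V S T) : vec R V S T :=
  fun v s t => lam s t * p v s * \prod_(u < V | u != v) (1 - x u s t * p u s).

Definition inner (R : realType) V S T (y z : vec R V S T) : R :=
  \sum_(v < V) \sum_(s < S) \sum_(t < T) y v s t * z v s t.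

Fixpoint aa_iter (R : realType) V S T (m : nat) (ys : nat -> vec R V S T)
    (i : nat) : vec R V S T :=
  match i with
  | 0 => fun _ _ _ => 0
  | i'.+1 => fun v s t => aa_iter m ys i' v s t + ys i'.+1 v s t / m%:R
  end.

Definition is_AA (R : realType) V S T lam p g (m : nat) (x : vec R V S T) : Prop :=
  (0 < m)%N /\
  exists ys : nat -> vec R V S T,
    (forall i, (1 <= i <= m)%N ->
       inP lam g (ys i) /\
       forall y, inP lam g y ->
         inner y (gradf lam p (aa_iter m ys i.-1))
           <= inner (ys i) (gradf lam p (aa_iter m ys i.-1))) /\
    x = aa_iter m ys m.

Definition rowP (R : realType) S T (lam : 'I_S -> 'I_T -> R) (g : nat -> R)
    (xv : 'I_S -> 'I_T -> R) : Prop :=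
  (forall s t, 0 <= xv s t <= 1) /\
  (forall t : 'I_T, \sum_(tau < T | (tau <= t)%N) \sum_(s < S)
        lam s tau * xv s tau * (1 - Gc g (t - tau)) <= 1).

Definition sqobj (R : realType) V S T (lam : 'I_S -> 'I_T -> R)
    (p : 'I_V -> 'I_S -> R) (x : vec R V S T) (v : 'I_V)
    (xv : 'I_S -> 'I_T -> R) : R :=
  \sum_(t < T) \sum_(s < S)
    lam s t * (\prod_(u < V | (u < v)%N) (1 - p u s * x u s t)) * p v s * xv s t.

Definition is_SQ (R : realType) V S T lam p g (x : vec R V S T) : Prop :=
  forall v, rowP lam g (x v) /\
    forall y, rowP lam g y -> sqobj lam p x v y <= sqobj lam p x v (x v).

Definition is_xstar (R : realType) V S T lam p g (x : vec R V S T) : Prop :=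
  exists (xLP xAA xSQ : vec R V S T) (m : nat),
    [/\ is_LP lam p g xLP, is_AA lam p g m xAA, is_SQ lam p g xSQ,
        (x = xLP \/ x = xAA \/ x = xSQ) &
        [/\ fobj lam p xLP <= fobj lam p x, fobj lam p xAA <= fobj lam p x
          & fobj lam p xSQ <= fobj lam p x]].

Definition beta (R : realType) V S T (lam : 'I_S -> 'I_T -> R) (g : nat -> R)
    (x : vec R V S T) (v : 'I_V) (t : 'I_T) : R :=
  1 - \sum_(t' < T | (t' < t)%N) \sum_(s < S)
        lam s t' * (x v s t' / (2 - qmdhr g)) * (1 - Gc g (t - t')).

Definition pnot (R : realType) V S T lam g (x : vec R V S T) v s t : R :=
  x v s t / ((2 - qmdhr g) * beta lam g x v t).

(* Sample space: arrivals, notification coins of every volunteer in every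
   period, and a return delay for every (volunteer, period).  A delay code
   d : 'I_T.+1 encodes Z = d+1; the code T stands for Z > T (only
   min(Z, T+1) can influence activity within the horizon). *)
Definition Omega (V S T : nat) : finType :=
  ({ffun 'I_T -> option 'I_S} * {ffun 'I_V * 'I_T -> bool}
     * {ffun 'I_V * 'I_T -> 'I_T.+1})%type.

Definition w_arr (R : realType) S T (lam : 'I_S -> 'I_T -> R)
    (a : option 'I_S) (t : 'I_T) : R :=
  match a with Some s => lam s t | None => 1 - \sum_(s < S) lam s t end.

Definition w_coin (R : realType) V S T (pi : 'I_V -> 'I_S -> 'I_T -> R)
    (a : option 'I_S) (v : 'I_V) (t : 'I_T) (c : bool) : R :=
  match a with
  | Some s => if c then pi v s t else 1 - pi v s t
  | None => if c then 0 else 1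
  end.

Definition w_del (R : realType) T (g : nat -> R) (d : 'I_T.+1) : R :=
  if (d < T)%N then g d.+1 else 1 - Gc g T.

Definition weight (R : realType) V S T lam g (x : vec R V S T)
    (w : Omega V S T) : R :=
  let: (a, c, d) := w in
  (\prod_(t < T) w_arr lam (a t) t)
  * (\prod_(vt : 'I_V * 'I_T) w_coin (pnot lam g x) (a vt.2) vt.1 vt.2 (c vt))
  * (\prod_(vt : 'I_V * 'I_T) w_del g (d vt)).

Definition Pr (R : realType) V S T lam g (x : vec R V S T)
    (E : Omega V S T -> bool) : R :=
  \sum_(w : Omega V S T) weight lam g x w * (E w)%:R.

Definition notif V S T (w : Omega V S T) (v : 'I_V) (n : nat) : bool :=
  let: (a, c, _) := w in
  match (insub n : option 'I_T) with
  | Some i => (a i != None) && c (v, i)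
  | None => false
  end.

Definition Zof V S T (w : Omega V S T) (v : 'I_V) (n : nat) : nat :=
  let: (_, _, d) := w in
  match (insub n : option 'I_T) with
  | Some i => (d (v, i)).+1
  | None => 0
  end.

(* earliest period from which v is active again (given the history before n) *)
Fixpoint ret V S T (w : Omega V S T) (v : 'I_V) (n : nat) : nat :=
  match n with
  | 0 => 0
  | n'.+1 => let r := ret w v n' in
             if (r <= n')%N && notif w v n' then (n' + Zof w v n')%N else r
  end.

Definition active V S T (w : Omega V S T) (v : 'I_V) (n : nat) : bool :=
  (ret w v n <= n)%N.

From HB Require Import structures.
From mathcomp Require Import all_boot all_order all_algebra.
From mathcomp Require Import all_classical all_reals all_analysis.
From mathcomp Require Import ring lra zify.
Import Order.TTheory GRing.Theory Num.Theory.
Import numFieldNormedType.Exports.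
Local Open Scope classical_set_scope.
Local Open Scope ring_scope.
Set Implicit Arguments. Unset Strict Implicit. Unset Printing Implicit Defensive.

(* Whether volunteer v is active at period n is a function of the arrivals,
   coins and delays of the periods before n, which are independent of those
   drawn at period n.  Since v is inactive at n exactly when it was notified
   while active at some t < n with a delay reaching past n, and at most one
   such t exists,
     Pr[inactive at n] = sum_(t<n) Pr[active at t] * (sum_s lam_{s,t} pi_{v,s,t}) * (1 - G(n-t)),
   and with pi = x / ((2-q) beta) an induction on n gives Pr[active at n] = beta_n.
   The hazard-rate bound 1 - G(k+1) <= (1-q) (1 - G(k)) turns the constraint of
   P at period n-1 into beta_n >= 1 - (1-q)/(2-q) = 1/(2-q); this also keeps
   beta positive, so the notification probabilities are well defined. *)

Section FiniteSums.
Variable R : comPzSemiRingType.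

Lemma sum_pair (I J : finType) (F : I * J -> R) :
  \sum_(p : I * J) F p = \sum_i \sum_j F (i, j).
Proof. by rewrite pair_big; apply: eq_bigr => -[]. Qed.

Lemma sum_option (I : finType) (F : option I -> R) :
  \sum_(o : option I) F o = F None + \sum_i F (Some i).
Proof.
rewrite (bigD1 None) //=; congr (_ + _).
rewrite (reindex_omap Some id) /=; last by case.
by apply: eq_bigl => i; rewrite eqxx.
Qed.

Lemma prod_pair_snd (I J : finType) (j0 : J) (F : I * J -> R) :
  \prod_(p : I * J | p.2 == j0) F p = \prod_i F (i, j0).
Proof.
rewrite (eq_big (fun p => true && (p.2 == j0)) (fun p => F (p.1, p.2))) //; last by case.
rewrite -(pair_big_dep (fun _ => true) (fun _ j => j == j0) (fun i j => F (i, j))).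
by apply: eq_bigr => i _; rewrite big_pred1_eq.
Qed.

Lemma sum_ffun_prod1 (I J : finType) (F : I -> J -> R) :
  (forall i, \sum_j F i j = 1) -> \sum_(f : {ffun I -> J}) \prod_i F i (f i) = 1.
Proof.
move=> F1; transitivity (\prod_i \sum_j F i j); first by rewrite bigA_distr_bigA.
exact: big1.
Qed.

Lemma sum_ffun_prod_eval (I J : finType) (F : I -> J -> R) (i0 : I) (h : J -> R) :
  \sum_(f : {ffun I -> J}) (\prod_i F i (f i)) * h (f i0)
  = (\sum_j F i0 j * h j) * \prod_(i | i != i0) \sum_j F i j.
Proof.
pose Fh i j := F i j * (if i == i0 then h j else 1).
transitivity (\sum_(f : {ffun I -> J}) \prod_i Fh i (f i)).
  apply: eq_bigr => f _; rewrite big_split /=; congr (_ * _).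
  by rewrite (bigD1 i0) //= eqxx [X in _ = _ * X]big1 ?mulr1 // => i /negbTE ->.
transitivity (\prod_i \sum_j Fh i j); first by rewrite bigA_distr_bigA.
rewrite (bigD1 i0) //= /Fh eqxx; congr (_ * _).
by apply: eq_bigr => i /negbTE ->; apply: eq_bigr => j _; rewrite mulr1.
Qed.

(* The three laws make [w |-> (get w, put w s0)] a bijection from [Om] onto
   [Sg] times the fibre of [s0]. *)
Lemma sum_lens_factor (Om Sg : finType) (get : Om -> Sg) (put : Om -> Sg -> Om)
    (K H : Sg -> R) (F : Om -> R) (s0 : Sg) :
  (forall w s, get (put w s) = s) -> (forall w s s', put (put w s) s' = put w s') ->
  (forall w, put w (get w) = w) -> (forall w s, F (put w s) = F w) ->
  \sum_w K (get w) * F w * H (get w) = (\sum_s K s * H s) * \sum_(w | get w == s0) F w.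
Proof.
move=> getK putA putK F_put.
rewrite (partition_big get predT) //= big_distrl /=; apply: eq_bigr => s _.
transitivity (K s * H s * \sum_(w | get w == s) F w).
  by rewrite big_distrr; apply: eq_bigr => w /eqP <-; rewrite mulrAC.
congr (_ * _).
rewrite (reindex_onto (put^~ s) (put^~ s0)) /=; last by move=> w /eqP <-; rewrite putA putK.
apply: eq_big => [w|w _]; last exact: F_put.
rewrite getK eqxx /= putA; apply/eqP/eqP => [<-|<-]; [exact: getK | exact: putK].
Qed.

End FiniteSums.

Lemma Gc0 (R : realType) (g : nat -> R) : Gc g 0 = 0.
Proof. by rewrite /Gc big_geq. Qed.

Lemma GcS (R : realType) (g : nat -> R) k : Gc g k.+1 = Gc g k + g k.+1.
Proof. by rewrite /Gc big_nat_recr. Qed.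

Lemma Gc_le1 (R : realType) (g : nat -> R) :
  g 0%N = 0 -> (forall n, 0 <= g n) ->
  (fun n : nat => \sum_(k < n) g k) @ \oo --> (1 : R) -> forall k, Gc g k <= 1.
Proof.
move=> g0 g_ge0 g_cvg k.
have -> : Gc g k = \sum_(i < k.+1) g i.
  by rewrite /Gc -(big_mkord xpredT g) (big_ltn (ltn0Sn k)) g0 add0r.
have partial_sum_nd : {homo (fun n => \sum_(i < n) g i) : n m / (n <= m)%N >-> n <= m}.
  by apply/nondecreasing_seqP => n; rewrite big_ord_recr /= lerDl.
have := nondecreasing_cvgn_le partial_sum_nd (cvgP _ g_cvg) k.+1.
by rewrite (cvg_lim (@Rhausdorff R) g_cvg).
Qed.

Section Hazard.
Variables (R : realType) (g : nat -> R).
Hypotheses (g_ge0 : forall n, 0 <= g n) (G_le1 : forall k, Gc g k <= 1).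

Lemma hz_ge0 n : 0 <= hz g n.
Proof.
rewrite /hz; case: ifP => _; first exact: ler01.
by rewrite divr_ge0 // subr_ge0.
Qed.

Lemma qmdhr_le_hz k : qmdhr g <= hz g k.+1.
Proof.
apply: ge_inf; last by exists k.
by exists 0 => _ [n _ <-]; exact: hz_ge0.
Qed.

Lemma qmdhr_le1 : qmdhr g <= 1.
Proof.
apply: le_trans (qmdhr_le_hz 0) _.
rewrite /hz /= Gc0 subr0 oner_eq0 divr1.
by have := G_le1 1; rewrite GcS Gc0 add0r.
Qed.

Lemma tail_hazard_le k : 1 - Gc g k.+1 <= (1 - qmdhr g) * (1 - Gc g k).
Proof.
have := qmdhr_le_hz k; rewrite /hz /= GcS.
have := g_ge0 k.+1; have := G_le1 k.
case: eqP => [tail0 | /eqP tail_neq0] Gk_le1 gk_ge0 q_le; first by rewrite tail0 mulr0; lra.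
have tail_gt0 : 0 < 1 - Gc g k by rewrite lt_neqAle eq_sym tail_neq0 subr_ge0.
by rewrite ler_pdivlMr // in q_le; rewrite mulrBl mul1r; lra.
Qed.

Lemma sum_gS_ge k N :
  \sum_(i < N) g i.+1 * (k <= i)%:R = Gc g (maxn k N) - Gc g k.
Proof.
elim: N => [|N IH]; first by rewrite big_ord0 maxn0 subrr.
rewrite big_ord_recr IH /=; case: (leqP k N) => [le_kN | lt_Nk].
  by rewrite (maxn_idPr (leqW le_kN)) mulr1 GcS; ring.
by rewrite (maxn_idPl lt_Nk) mulr0 addr0.
Qed.

End Hazard.

Section Slices.
Variables V S T : nat.

Definition slice : finType :=
  (option 'I_S * {ffun 'I_V -> bool} * {ffun 'I_V -> 'I_T.+1})%type.

Definition slice_at (n : 'I_T) (w : Omega V S T) : slice :=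
  let: (a, c, d) := w in (a n, [ffun u => c (u, n)], [ffun u => d (u, n)]).

Definition put_slice (n : 'I_T) (w : Omega V S T) (sg : slice) : Omega V S T :=
  let: (a, c, d) := w in let: (o, cf, df) := sg in
  ([ffun t => if t == n then o else a t],
   [ffun ut : 'I_V * 'I_T => if ut.2 == n then cf ut.1 else c ut],
   [ffun ut : 'I_V * 'I_T => if ut.2 == n then df ut.1 else d ut]).

Lemma slice_at_put n w sg : slice_at n (put_slice n w sg) = sg.
Proof.
case: w => [[a c] d]; case: sg => [[os cf] df] /=.
by rewrite !ffunE eqxx; congr (_, _, _); apply/ffunP => u; rewrite !ffunE /= eqxx.
Qed.

Lemma put_sliceA n w sg sg' : put_slice n (put_slice n w sg) sg' = put_slice n w sg'.
Proof.
case: w => [[a c] d]; case: sg => [[os cf] df]; case: sg' => [[os' cf'] df'] /=.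
by congr (_, _, _); apply/ffunP => t; rewrite !ffunE; case: ifP => // ->.
Qed.

Lemma put_slice_at n w : put_slice n w (slice_at n w) = w.
Proof.
case: w => [[a c] d] /=.
congr (_, _, _); apply/ffunP; [move=> t | case=> u t | case=> u t];
  by rewrite !ffunE //=; case: eqP => // ->.
Qed.

Lemma notif_put_slice (n : 'I_T) w sg v (m : nat) :
  (m != n)%N -> notif (put_slice n w sg) v m = notif w v m.
Proof.
move=> mn; case: w => [[a c] d]; case: sg => [[os cf] df]; rewrite /notif /=.
case: insubP => [i _ im|//].
have /negbTE i_n : i != n by apply: contra mn => /eqP <-; rewrite im.
by rewrite !ffunE /= i_n.
Qed.

Lemma Zof_put_slice (n : 'I_T) w sg v (m : nat) :
  (m != n)%N -> Zof (put_slice n w sg) v m = Zof w v m.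
Proof.
move=> mn; case: w => [[a c] d]; case: sg => [[os cf] df]; rewrite /Zof /=.
case: insubP => [i _ im|//].
have /negbTE i_n : i != n by apply: contra mn => /eqP <-; rewrite im.
by rewrite !ffunE /= i_n.
Qed.

Lemma ret_put_slice (n : 'I_T) w sg v (m : nat) :
  (m <= n)%N -> ret (put_slice n w sg) v m = ret w v m.
Proof.
elim: m => [//|m IH] lt_mn /=.
have mn : m != n by rewrite neq_ltn lt_mn.
by rewrite IH ?(ltnW lt_mn) // notif_put_slice // Zof_put_slice.
Qed.

Lemma active_put_slice n w sg v : active (put_slice n w sg) v n = active w v n.
Proof. by rewrite /active ret_put_slice. Qed.

Definition notified_away (v : 'I_V) (k : nat) (sg : slice) : bool :=
  let: (o, cf, df) := sg in [&& o != None, cf v & (k < (df v).+1)%N].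

Lemma notif_awayE v (t : 'I_T) (m : nat) w :
  notif w v t && (m < t + Zof w v t)%N = notified_away v (m - t) (slice_at t w).
Proof.
case: w => [[a c] d]; rewrite /notif /Zof /= valK !ffunE -andbA.
by congr [&& _, _ & _]; apply/idP/idP; lia.
Qed.

(* A notification while active at t sets [ret] to t + Z, and v can be notified
   while active again only from then on: at most one term of the sum is 1. *)
Lemma ret_count (w : Omega V S T) (v : 'I_V) (m j : nat) : (m <= j)%N ->
  (\sum_(0 <= t < m) (active w v t && notif w v t && (j < t + Zof w v t))
   = (j < ret w v m) :> nat)%N.
Proof.
elim: m => [|m IH] lt_mj; first by rewrite big_geq.
rewrite big_nat_recr //= IH ?(ltnW lt_mj) // /active.
case: (leqP (ret w v m) m) => [ret_le | _]; case: (notif w v m) => /=;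
  try by case: (j < ret w v m)%N.
by rewrite ltnNge (leq_trans ret_le (ltnW lt_mj)).
Qed.

Lemma inactive_count (w : Omega V S T) (v : 'I_V) (n : nat) :
  (~~ active w v n
   = \sum_(0 <= t < n) (active w v t && notif w v t && (n < t + Zof w v t)) :> nat)%N.
Proof. by rewrite ret_count // /active -ltnNge. Qed.

End Slices.

Section SDNProbability.
Variables (R : realType) (V S T : nat).
Variables (lam : 'I_S -> 'I_T -> R) (g : nat -> R) (x : vec R V S T).
Local Notation pi := (pnot lam g x).
Local Notation Pr := (Pr lam g x).

Lemma sum_w_arr t : \sum_(o : option 'I_S) w_arr lam o t = 1.
Proof. by rewrite sum_option /= subrK. Qed.

Lemma sum_w_coin o u t : \sum_(b : bool) w_coin pi o u t b = 1.
Proof.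
by rewrite big_bool; case: o => [s|] /=; [rewrite addrC subrK | rewrite add0r].
Qed.

Lemma sum_w_del_gt k : (k <= T)%N ->
  \sum_(d : 'I_T.+1) w_del g d * (k < d.+1)%:R = 1 - Gc g k.
Proof.
move=> le_kT; rewrite big_ord_recr /=.
under eq_bigr => i _ do rewrite /w_del /= ltn_ord ltnS.
rewrite sum_gS_ge /w_del /= ltnn ltnS le_kT mulr1 (maxn_idPr le_kT).
ring.
Qed.

Lemma sum_w_del : \sum_(d : 'I_T.+1) w_del g d = 1.
Proof.
have := sum_w_del_gt (leq0n T); rewrite Gc0 subr0 => <-.
by apply: eq_bigr => d _; rewrite mulr1.
Qed.

Lemma sum_prod_w_coin (I : finType) (o : I -> option 'I_S) (u : I -> 'I_V)
    (t : I -> 'I_T) :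
  \sum_(c : {ffun I -> bool}) \prod_i w_coin pi (o i) (u i) (t i) (c i) = 1.
Proof.
by apply: (sum_ffun_prod1 (F := fun i => w_coin pi (o i) (u i) (t i))) => i; exact: sum_w_coin.
Qed.

Lemma sum_prod_w_del (I : finType) :
  \sum_(d : {ffun I -> 'I_T.+1}) \prod_i w_del g (d i) = 1.
Proof. by apply: (sum_ffun_prod1 (F := fun _ => w_del g)) => _; exact: sum_w_del. Qed.

Definition slice_weight (n : 'I_T) (sg : slice V S T) : R :=
  let: (o, cf, df) := sg in
  w_arr lam o n * \prod_u w_coin pi o u n (cf u) * \prod_u w_del g (df u).

Definition rest_weight (n : 'I_T) (w : Omega V S T) : R :=
  let: (a, c, d) := w in
  (\prod_(t | t != n) w_arr lam (a t) t)
  * (\prod_(vt : 'I_V * 'I_T | vt.2 != n) w_coin pi (a vt.2) vt.1 vt.2 (c vt))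
  * \prod_(vt : 'I_V * 'I_T | vt.2 != n) w_del g (d vt).

Lemma weight_slice (n : 'I_T) (w : Omega V S T) :
  weight lam g x w = slice_weight n (slice_at n w) * rest_weight n w.
Proof.
case: w => [[a c] d]; rewrite /weight /slice_weight /rest_weight /= (bigD1 n) //=.
rewrite [\prod_vt w_coin _ _ _ _ _](bigID (fun vt : 'I_V * 'I_T => vt.2 == n)) /=.
rewrite [\prod_vt w_del _ _](bigID (fun vt : 'I_V * 'I_T => vt.2 == n)) /=.
rewrite !prod_pair_snd /=.
under [X in _ = _ * X * _ * _]eq_bigr => u _ do rewrite ffunE.
under [X in _ = _ * X * _]eq_bigr => u _ do rewrite ffunE.
ring.
Qed.

Lemma rest_weight_put (n : 'I_T) w sg :
  rest_weight n (put_slice n w sg) = rest_weight n w.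
Proof.
case: w => [[a c] d]; case: sg => [[os cf] df] /=.
by congr (_ * _ * _); apply: eq_bigr => t /negbTE t_n; rewrite !ffunE t_n.
Qed.

Lemma sum_weight : \sum_(w : Omega V S T) weight lam g x w = 1.
Proof.
rewrite sum_pair sum_pair.
under eq_bigr => a _ do under eq_bigr => c _ do
  rewrite /weight /= -big_distrr /= sum_prod_w_del mulr1.
under eq_bigr => a _ do
  rewrite -big_distrr /= (sum_prod_w_coin (fun vt => a vt.2) fst snd) mulr1.
exact: sum_ffun_prod1 sum_w_arr.
Qed.

Lemma sum_slice_weight n : \sum_(sg : slice V S T) slice_weight n sg = 1.
Proof.
rewrite sum_pair sum_pair.
under eq_bigr => o _ do under eq_bigr => cf _ do
  rewrite /= -big_distrr /= sum_prod_w_del mulr1.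
under eq_bigr => o _ do
  rewrite -big_distrr /= (sum_prod_w_coin (fun _ => o) id (fun _ => n)) mulr1.
exact: sum_w_arr.
Qed.

Lemma sum_slice_weight_away v (n : 'I_T) k : (k <= T)%N ->
  \sum_(sg : slice V S T) slice_weight n sg * (notified_away v k sg)%:R
  = (\sum_s lam s n * pi v s n) * (1 - Gc g k).
Proof.
move=> le_kT.
have coins s : \sum_(cf : {ffun 'I_V -> bool})
    (\prod_u w_coin pi (Some s) u n (cf u)) * (cf v)%:R = pi v s n.
  have /= -> := sum_ffun_prod_eval (fun u => w_coin pi (Some s) u n) v (fun b : bool => b%:R).
  rewrite big_bool /= mulr1 mulr0 addr0 big1 ?mulr1 // => u _.
  exact: (sum_w_coin (Some s) u n).
have dels : \sum_(df : {ffun 'I_V -> 'I_T.+1})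
    (\prod_u w_del g (df u)) * (k < (df v).+1)%:R = 1 - Gc g k.
  have /= -> := sum_ffun_prod_eval (fun _ => w_del g) v (fun d : 'I_T.+1 => (k < d.+1)%:R).
  by rewrite sum_w_del_gt // big1 ?mulr1 // => u _; exact: sum_w_del.
rewrite sum_pair sum_pair sum_option big1 ?add0r => [|cf _]; last first.
  by rewrite big1 // => df _; rewrite /= mulr0.
rewrite big_distrl /=; apply: eq_bigr => s _.
under eq_bigr => cf _ do under eq_bigr => df _ do rewrite /= -mulnb natrM mulrACA.
under eq_bigr => cf _ do rewrite -big_distrr /= dels.
rewrite -big_distrl /=; congr (_ * _).
under eq_bigr => cf _ do rewrite -mulrA.
by rewrite -big_distrr /= coins.
Qed.

Lemma PrNeg (E : Omega V S T -> bool) : Pr E = 1 - Pr (fun w => ~~ E w).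
Proof.
apply/eqP; rewrite eq_sym subr_eq -sum_weight /Pr -big_split /=.
by apply/eqP/eq_bigr => w _; case: (E w); rewrite /= ?mulr1 ?mulr0 ?addr0 ?add0r.
Qed.

Lemma Pr_active_slice v (n : 'I_T) (E : slice V S T -> bool) :
  Pr (fun w => active w v n && E (slice_at n w))
  = Pr (fun w => active w v n) * \sum_sg slice_weight n sg * (E sg)%:R.
Proof.
pose F w := rest_weight n w * (active w v n)%:R.
have F_put w sg : F (put_slice n w sg) = F w.
  by rewrite /F rest_weight_put active_put_slice.
have factor := sum_lens_factor (slice_weight n) _ (None, [ffun => false], [ffun => ord0])
  (@slice_at_put V S T n) (@put_sliceA V S T n) (@put_slice_at V S T n) F_put.
rewrite /Pr (eq_bigr (fun w => slice_weight n (slice_at n w) * F w * (E (slice_at n w))%:R));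
  last by move=> w _; rewrite (weight_slice n) -mulnb natrM /F; ring.
rewrite [in RHS](eq_bigr (fun w => slice_weight n (slice_at n w) * F w * 1));
  last by move=> w _; rewrite (weight_slice n) /F mulr1 mulrA.
have /= -> := factor (fun sg => (E sg)%:R).
have /= -> := factor (fun _ => 1).
under [X in _ = X * _ * _]eq_bigr do rewrite mulr1.
by rewrite sum_slice_weight mul1r mulrC.
Qed.

Lemma Pr_active_notified_away v (n t : 'I_T) :
  Pr (fun w => active w v t && notif w v t && (n < t + Zof w v t)%N)
  = Pr (fun w => active w v t) * (\sum_s lam s t * pi v s t) * (1 - Gc g (n - t)).
Proof.
have le_nt_T : (n - t <= T)%N by rewrite (leq_trans (leq_subr _ _)) // ltnW.
rewrite -mulrA -sum_slice_weight_away // -Pr_active_slice.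
by apply: eq_bigr => w _; rewrite -andbA notif_awayE.
Qed.

Lemma Pr_active_rec v (n : 'I_T) :
  Pr (fun w => active w v n)
  = 1 - \sum_(t < T | (t < n)%N) Pr (fun w => active w v t)
          * (\sum_s lam s t * pi v s t) * (1 - Gc g (n - t)).
Proof.
rewrite PrNeg; congr (1 - _).
under [RHS]eq_bigr => t _ do rewrite -Pr_active_notified_away.
rewrite /Pr exchange_big /=; apply: eq_bigr => w _.
rewrite -big_distrr /= -natr_sum inactive_count big_mkord.
pose away_at t := (active w v t && notif w v t && (n < t + Zof w v t)%N : nat).
by rewrite -(big_ord_widen T away_at (ltnW (ltn_ord n))).
Qed.

Lemma Pr_active_beta (v : 'I_V) :
  2 - qmdhr g != 0 -> (forall t, beta lam g x v t != 0) ->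
  forall t : 'I_T, Pr (fun w => active w v t) = beta lam g x v t.
Proof.
move=> q_neq0 beta_neq0 t; have [N] := ubnP (val t); elim: N t => // N IH t lt_tN.
rewrite Pr_active_rec /beta; congr (1 - _); apply: eq_bigr => tau lt_taut.
rewrite IH ?(leq_trans lt_taut) // big_distrr big_distrl /=; apply: eq_bigr => s _.
by rewrite /pnot; field; rewrite beta_neq0 q_neq0.
Qed.

End SDNProbability.

Section Feasibility.
Variables (R : realType) (V S T : nat) (lam : 'I_S -> 'I_T -> R) (g : nat -> R).

Definition load (x : vec R V S T) v (t : 'I_T) : R :=
  \sum_(tau < T | (tau <= t)%N) \sum_(s < S)
    lam s tau * x v s tau * (1 - Gc g (t - tau)).

Lemma aa_iter_feasible (m : nat) (ys : nat -> vec R V S T) :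
  (forall i, (1 <= i <= m)%N -> inP lam g (ys i)) ->
  forall i, (i <= m)%N ->
  (forall v s t, 0 <= aa_iter m ys i v s t) /\
  (forall v t, load (aa_iter m ys i) v t <= i%:R / m%:R).
Proof.
move=> ys_in; elim=> [|i IH] lt_im.
  split=> [//|v t]; rewrite /load mul0r big1 // => tau _.
  by rewrite big1 // => s _; rewrite mulr0 mul0r.
have [IH_ge0 IH_load] := IH (ltnW lt_im).
have [y_01 y_load] := ys_in i.+1 lt_im.
have invm_ge0 : 0 <= (m%:R : R)^-1 by rewrite invr_ge0 ler0n.
split=> [v s t|v t] /=.
  by rewrite addr_ge0 ?mulr_ge0 //; case/andP: (y_01 v s t).
have -> : load (aa_iter m ys i.+1) v t
    = load (aa_iter m ys i) v t + load (ys i.+1) v t / m%:R.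
  rewrite /load mulr_suml -big_split /=; apply: eq_bigr => tau _.
  rewrite mulr_suml -big_split /=; apply: eq_bigr => s _; ring.
rewrite -natr1 mulrDl lerD ?IH_load //.
by rewrite ler_wpM2r // y_load.
Qed.

Lemma xstar_feasible (p : 'I_V -> 'I_S -> R) (x : vec R V S T) :
  is_xstar lam p g x ->
  (forall v s t, 0 <= x v s t) /\ (forall v t, load x v t <= 1).
Proof.
case=> xLP [xAA [xSQ [m [[[LP_01 LP_load] _] [m_gt0 [ys [ys_opt ->]]] SQ_opt x_eq _]]]].
case: x_eq => [->|[->|->]].
- by split=> [v s t|//]; case/andP: (LP_01 v s t).
- have [AA_ge0 AA_load] := aa_iter_feasible (fun i im => (ys_opt i im).1) (leqnn m).
  have m_neq0 : m%:R != 0 :> R by rewrite pnatr_eq0 -lt0n.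
  by split=> // v t; rewrite -(divff m_neq0).
- split=> [v s t|v t]; have [[SQ_01 SQ_load] _] := SQ_opt v; last exact: SQ_load.
  by case/andP: (SQ_01 s t).
Qed.

End Feasibility.

Section BetaLowerBound.
Variables (R : realType) (V S T : nat).
Variables (lam : 'I_S -> 'I_T -> R) (g : nat -> R) (x : vec R V S T).
Hypotheses (lam_ge0 : forall s t, 0 <= lam s t) (g_ge0 : forall n, 0 <= g n).
Hypotheses (G_le1 : forall k, Gc g k <= 1) (x_ge0 : forall v s t, 0 <= x v s t).
Hypothesis x_load : forall v t, load lam g x v t <= 1.
Local Notation q := (qmdhr g).

Lemma two_sub_qmdhr_gt0 : 0 < 2 - q.
Proof. by have := qmdhr_le1 g_ge0 G_le1; lra. Qed.

Lemma beta_load_succ v (t : 'I_T) (lt_tT : (t.+1 < T)%N) :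
  \sum_(t' < T | (t' < t.+1)%N) \sum_s
      lam s t' * (x v s t' / (2 - q)) * (1 - Gc g (t.+1 - t'))
  <= (1 - q) / (2 - q) * load lam g x v t.
Proof.
have q_gt0 := two_sub_qmdhr_gt0.
rewrite /load big_distrr /=; apply: ler_sum => tau; rewrite ltnS => le_taut.
rewrite big_distrr /=; apply: ler_sum => s _.
have coef_ge0 : 0 <= lam s tau * (x v s tau / (2 - q)).
  by rewrite mulr_ge0 ?divr_ge0 ?lam_ge0 ?x_ge0 // ltW.
rewrite (subSn le_taut); apply: le_trans (ler_wpM2l coef_ge0 (tail_hazard_le g_ge0 G_le1 _)) _.
by rewrite le_eqVlt; apply/orP; left; apply/eqP; field; rewrite lt0r_neq0.
Qed.

Lemma beta_ge v t : 1 / (2 - q) <= beta lam g x v t.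
Proof.
have q_gt0 := two_sub_qmdhr_gt0; have q_le1 := qmdhr_le1 g_ge0 G_le1.
case: t => [[|t] lt_tT].
  rewrite /beta big_pred0 ?subr0 => [|t']; last by rewrite ltn0.
  by rewrite ler_pdivrMr // mul1r; lra.
have := @beta_load_succ v (Ordinal (ltnW lt_tT)) lt_tT.
have : (1 - q) / (2 - q) * load lam g x v (Ordinal (ltnW lt_tT)) <= (1 - q) / (2 - q).
  by rewrite -[leRHS]mulr1 ler_wpM2l ?divr_ge0 ?x_load //; lra.
rewrite /beta /=.
have -> : 1 / (2 - q) = 1 - (1 - q) / (2 - q) by field; rewrite lt0r_neq0.
lra.
Qed.

End BetaLowerBound.

Unset Implicit Arguments.

Theorem lemma7 (R : realType) (V S T : nat)
    (lam : 'I_S -> 'I_T -> R) (p : 'I_V -> 'I_S -> R) (g : nat -> R)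
    (x : vec R V S T) :
  (forall s t, 0 <= lam s t) ->
  (forall t, \sum_(s < S) lam s t <= 1) ->
  (forall v s, 0 <= p v s <= 1) ->
  g 0%N = 0 -> (forall n, 0 <= g n) ->
  ((fun n : nat => \sum_(k < n) g k) @ \oo --> (1 : R)) ->
  is_xstar lam p g x ->
  forall (v : 'I_V) (t : 'I_T),
    Pr lam g x (fun w => active w v t) = beta lam g x v t /\
    1 / (2 - qmdhr g) <= beta lam g x v t.
Proof.
(* [Pr] only uses that the weights of each coordinate sum to 1. *)
move=> lam_ge0 _ _ g0 g_ge0 g_cvg x_star v t.
have G_le1 := Gc_le1 g0 g_ge0 g_cvg.
have [x_ge0 x_load] := xstar_feasible x_star.
have beta_lb := beta_ge lam_ge0 g_ge0 G_le1 x_ge0 x_load v.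
split; last exact: beta_lb.
apply: Pr_active_beta t => [|t']; first exact/lt0r_neq0/two_sub_qmdhr_gt0.
by rewrite lt0r_neq0 // (lt_le_trans _ (beta_lb t')) // divr_gt0 // two_sub_qmdhr_gt0.
Qed.
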